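(* Let $(\mathbf{M}_i)_{i\in I}$ be a family of $L$-structures with an emerging metric along an ultrafilter $\mathcal{D}$ on $I$, with local ultraproduct $\mathbf{M}_{\mathrm{loc}}$. Let $\sigma(\bar x)$ be a formula (in the sense of general real-valued structures) in the vocabulary $L^+$ all of whose quantifiers are restricted to sorts $S_m$, and for each $i\in I$ let $\bar a(i)$ be a tuple of parameters in $M_i$, all lying in $S_{m_0}(M_i)$ for a fixed $m_0\in\mathbb{N}$. Let $\bar a=\mathsf{lm}^{\mathrm{loc}}([\bar a(i)]_{\mathcal{D}})\in\mathbf{M}_{\mathrm{loc}}$. Then $$\lim_{\mathcal{D}}\ \sigma^{\mathbf{M}_i}(\bar a(i))=\sigma^{\mathbf{M}_{\mathrm{loc}}}(\bar a),$$ where $\lim_{\mathcal{D}}$ is the limit of real numbers along the ultrafilter $\mathcal{D}$.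
   Context: Emerging metric: each $M_i$ carries subsets $S_m(M_i)$, $m\in\mathbb{N}$, with $S_m(M_i)\subseteq S_{m+1}(M_i)$, $\bigcup_m S_m(M_i)=M_i$, and a distance function $\mathsf{d}_i:M_i^2\to\mathbb{R}_{\ge0}$; in the first-order ultraproduct ${}^*\mathbf{M}=\prod_{\mathcal{D}}\mathbf{M}_i$, with $S_m({}^*M)=\prod_{\mathcal{D}}S_m(M_i)$ and induced hyperreal-valued $\mathsf{d}$, one requires: (1) the triangle inequality; (2) for each $n$-ary function symbol $f$ and $m$ some $k$ with $f(S_m({}^*M)^n)\subseteq S_k({}^*M)$; (3) $\mathsf{d}(x,y)\le m$ on $S_m({}^*M)$; (4) for each $f$, $m$, real $\epsilon>0$ a real $\delta>0$ with $\mathsf{d}(f(\bar x),f(\bar y))<\epsilon$ whenever $\bar x,\bar y\in S_m({}^*M)^n$, $\mathsf{d}(x_j,y_j)<\delta$ for all $j$; (5) for each relation symbol $P$, $m$, and $\bar x^0\in S_m({}^*M)^n\setminus P$ a real $\delta>0$ such that $\bar x\notin P$ whenever $\mathsf{d}(x^0_j,x_j)<\delta$ for all $j$. The local part ${}^*\mathbf{M}_{\mathrm{loc}}$ has universe $\bigcup_{m\in\mathbb{N}}S_m({}^*M)$; $x\approx y$ iff $\mathsf{d}(x,y)\le1/n$ for all $n\in\mathbb{N}$; $\mathbf{M}_{\mathrm{loc}}={}^*\mathbf{M}_{\mathrm{loc}}/\!\approx$ with induced functions, relations interpreted as images, $S_m$ interpreted as the image of $S_m({}^*M)$, and metric $\mathrm{st}\,\mathsf{d}$;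 $\mathsf{lm}^{\mathrm{loc}}$ is the quotient map. The vocabulary $L^+$ is $L$ without equality together with the distance symbol $\mathsf{d}$ and unary predicates $S_m$. Formulas are those of general (real-valued) structures: atomic formulas are $\mathsf{d}(t_1,t_2)$ and $P(\bar t)$ (a relation taking truth value $0$ if it holds and $1$ otherwise), connectives are arbitrary continuous real functions of finitely many arguments, quantifiers are $\sup_x$ and $\inf_x$ (here restricted to $x\in S_m$), and the truth value $\sigma^{\mathbf{N}}(\bar a)$ in a structure $\mathbf{N}$ is defined by induction on the formula, with $\mathsf{d}$ interpreted as $\mathsf{d}_i$ in $\mathbf{M}_i$ and as the metric in $\mathbf{M}_{\mathrm{loc}}$. *)

From Stdlib Require Import Reals Lra Lia Arith ClassicalEpsilon Classical.
From Coquelicot Require Import Coquelicot.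
Open Scope R_scope.

Definition Ix (n : nat) : Type := {k : nat | (k < n)%nat}.

Record Vocab := {
  fsym : Type;
  farity : fsym -> nat;
  rsym : Type;
  rarity : rsym -> nat }.

(* ---------- a structure for the vocabulary L^+ :
   L without equality, plus the distance symbol d and unary predicates S_m --- *)
Record GStruct (L : Vocab) := {
  carrier : Type;
  gd : carrier -> carrier -> R;
  gfn : forall f : fsym L, (Ix (farity L f) -> carrier) -> carrier;
  grl : forall P : rsym L, (Ix (rarity L P) -> carrier) -> Prop;
  gS : nat -> carrier -> Prop }.
Arguments carrier {L}.
Arguments gd {L}.
Arguments gfn {L}.
Arguments grl {L}.
Arguments gS {L}.

Definition cont_conn {k : nat} (u : (Ix k -> R) -> R) : Prop :=
  forall (x : Ix k -> R) (eps : R), 0 < eps ->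
    exists delta, 0 < delta /\
      forall y : Ix k -> R, (forall j, Rabs (y j - x j) < delta) ->
        Rabs (u y - u x) < eps.

Inductive term (L : Vocab) (n : nat) : Type :=
| tvar : Ix n -> term L n
| tapp : forall f : fsym L, (Ix (farity L f) -> term L n) -> term L n.
Arguments tvar {L n}.
Arguments tapp {L n}.

(* formulas with free variables among x_0,...,x_{n-1};
   quantifiers bind the new variable x_n and are restricted to S_m *)
Inductive formula (L : Vocab) : nat -> Type :=
| fdist : forall n, term L n -> term L n -> formula L n
| frel : forall n (P : rsym L), (Ix (rarity L P) -> term L n) -> formula L n
| fconn : forall n k (u : (Ix k -> R) -> R), cont_conn u ->
          (Ix k -> formula L n) -> formula L n
| fsup : forall n, nat -> formula L (S n) -> formula L n
| finf : forall n, nat -> formula L (S n) -> formula L n.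
Arguments fdist {L n}.
Arguments frel {L n}.
Arguments fconn {L n k}.
Arguments fsup {L n}.
Arguments finf {L n}.

Definition ext {T : Type} {n : nat} (a : Ix n -> T) (b : T) : Ix (S n) -> T :=
  fun j => match lt_dec (proj1_sig j) n with
           | left h => a (exist _ (proj1_sig j) h)
           | right _ => b
           end.

Fixpoint teval {L : Vocab} (M : GStruct L) {n : nat} (t : term L n)
  (a : Ix n -> carrier M) : carrier M :=
  match t with
  | tvar j => a j
  | tapp f ts => gfn M f (fun j => teval M (ts j) a)
  end.

(* truth value sigma^N(a); relations have value 0 if they hold, 1 otherwise;
   sup / inf over S_m (as extended reals, then 'real'; unbounded/empty
   cases get Coquelicot's conventional value) *)
Fixpoint eval {L : Vocab} (M : GStruct L) {n : nat} (phi : formula L n)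
  : (Ix n -> carrier M) -> R :=
  match phi in formula _ n return (Ix n -> carrier M) -> R with
  | fdist _ t1 t2 => fun a => gd M (teval M t1 a) (teval M t2 a)
  | frel _ P ts => fun a =>
      if excluded_middle_informative (grl M P (fun j => teval M (ts j) a))
      then 0 else 1
  | fconn _ _ u _ ps => fun a => u (fun j => eval M (ps j) a)
  | fsup _ m psi => fun a =>
      real (Lub_Rbar (fun r => exists b, gS M m b /\ r = eval M psi (ext a b)))
  | finf _ m psi => fun a =>
      real (Glb_Rbar (fun r => exists b, gS M m b /\ r = eval M psi (ext a b)))
  end.

Record ultrafilter {I : Type} (D : (I -> Prop) -> Prop) : Prop := {
  uf_full : D (fun _ => True);
  uf_empty : ~ D (fun _ => False);
  uf_up : forall A B : I -> Prop, D A -> (forall i, A i -> B i) -> D B;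
  uf_inter : forall A B : I -> Prop, D A -> D B -> D (fun i => A i /\ B i);
  uf_ultra : forall A : I -> Prop, D A \/ D (fun i => ~ A i) }.

Definition ulim {I : Type} (D : (I -> Prop) -> Prop) (u : I -> R) (r : R) : Prop :=
  forall eps, 0 < eps -> D (fun i => Rabs (u i - r) < eps).

(* the D-limit as a value (standard part of the hyperreal [u]_D) *)
Definition Dlim {I : Type} (D : (I -> Prop) -> Prop) (u : I -> R) : R :=
  epsilon (inhabits 0) (fun r => ulim D u r).

(* ---------- the ultraproduct *M, via representatives ---------- *)
Section Ultra.
Context {L : Vocab} {I : Type} (D : (I -> Prop) -> Prop) (M : I -> GStruct L).

Definition seqs : Type := forall i, carrier (M i).

Definition inS (m : nat) (x : seqs) : Prop := D (fun i => gS (M i) m (x i)).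

Definition uapp (f : fsym L) (xs : Ix (farity L f) -> seqs) : seqs :=
  fun i => gfn (M i) f (fun j => xs j i).

Definition urel (P : rsym L) (xs : Ix (rarity L P) -> seqs) : Prop :=
  D (fun i => grl (M i) P (fun j => xs j i)).

Record emerging_metric : Prop := {
  em_mono : forall i m x, gS (M i) m x -> gS (M i) (S m) x;
  em_cover : forall i x, exists m, gS (M i) m x;
  em_nonneg : forall i x y, 0 <= gd (M i) x y;
  em_refl : forall x : seqs, D (fun i => gd (M i) (x i) (x i) = 0);
  em_sym : forall x y : seqs, D (fun i => gd (M i) (x i) (y i) = gd (M i) (y i) (x i));
  em_tri : forall x y z : seqs,
      D (fun i => gd (M i) (x i) (z i) <= gd (M i) (x i) (y i) + gd (M i) (y i) (z i));
  em_fun : forall f m, exists k, forall xs : Ix (farity L f) -> seqs,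
      (forall j, inS m (xs j)) -> inS k (uapp f xs);
  em_bound : forall m (x y : seqs), inS m x -> inS m y ->
      D (fun i => gd (M i) (x i) (y i) <= INR m);
  em_cont : forall f m eps, 0 < eps -> exists delta, 0 < delta /\
      forall xs ys : Ix (farity L f) -> seqs,
        (forall j, inS m (xs j)) -> (forall j, inS m (ys j)) ->
        (forall j, D (fun i => gd (M i) (xs j i) (ys j i) < delta)) ->
        D (fun i => gd (M i) (uapp f xs i) (uapp f ys i) < eps);
  em_rel : forall P m (x0 : Ix (rarity L P) -> seqs),
      (forall j, inS m (x0 j)) -> ~ urel P x0 ->
      exists delta, 0 < delta /\
        forall x : Ix (rarity L P) -> seqs,
          (forall j, D (fun i => gd (M i) (x0 j i) (x j i) < delta)) -> ~ urel P x }.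

Definition local (x : seqs) : Prop := exists m, inS m x.

Definition approx (x y : seqs) : Prop :=
  forall n : nat, (0 < n)%nat -> D (fun i => gd (M i) (x i) (y i) <= / INR n).

(* elements of M_loc: ~-classes of local elements *)
Record locq : Type := {
  cls : seqs -> Prop;
  cls_ok : exists x, local x /\ cls = approx x }.

Definition lm (x : seqs) (h : local x) : locq :=
  {| cls := approx x; cls_ok := ex_intro _ x (conj h eq_refl) |}.

Definition rep (c : locq) : seqs :=
  proj1_sig (constructive_indefinite_description _ (cls_ok c)).

Lemma rep_local (c : locq) : local (rep c).
Proof.
  unfold rep. exact (proj1 (proj2_sig (constructive_indefinite_description _ (cls_ok c)))).
Qed.

Lemma finite_bound (n : nat) (Q : nat -> nat -> Prop) :
  (forall k, (k < n)%nat -> exists m, Q k m) ->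
  (forall k m m', (m <= m')%nat -> Q k m -> Q k m') ->
  exists m, forall k, (k < n)%nat -> Q k m.
Proof.
  intros H Hm. induction n as [|n IH].
  - exists 0%nat. intros k hk. lia.
  - destruct IH as [m1 H1].
    + intros k hk. apply H. lia.
    + destruct (H n (Nat.lt_succ_diag_r n)) as [m2 H2].
      exists (Nat.max m1 m2). intros k hk.
      destruct (Nat.eq_dec k n) as [->|hne].
      * apply (Hm n m2); [lia|exact H2].
      * apply (Hm k m1); [lia|]. apply H1. lia.
Qed.

Lemma inS_mono (HD : ultrafilter D) (HM : emerging_metric) m m' x :
  (m <= m')%nat -> inS m x -> inS m' x.
Proof.
  intros hle hx. induction hle as [|m' hle IH]; [exact hx|].
  apply (uf_up D HD _ _ IH). intros i hi. apply (em_mono HM). exact hi.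
Qed.

Lemma emerging_local (HD : ultrafilter D) (HM : emerging_metric)
  (f : fsym L) (xs : Ix (farity L f) -> seqs) :
  (forall j, local (xs j)) -> local (uapp f xs).
Proof.
  intros hl.
  destruct (finite_bound (farity L f)
     (fun k m => forall h : (k < farity L f)%nat, inS m (xs (exist _ k h))))
    as [m Hm].
  - intros k hk. destruct (hl (exist _ k hk)) as [m hm]. exists m.
    intros h. rewrite (Peano_dec.le_unique _ _ h hk). exact hm.
  - intros k m m' hle hq h. apply (inS_mono HD HM m m'); [exact hle|apply hq].
  - destruct (em_fun HM f m) as [k Hk]. exists k. apply Hk.
    intros [j hj]. apply Hm; exact hj.
Qed.

Lemma all_local (HD : ultrafilter D) (m0 : nat) (x : seqs) :
  (forall i, gS (M i) m0 (x i)) -> local x.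
Proof.
  intros h. exists m0. apply (uf_up D HD (fun _ => True)); [apply (uf_full D HD)|].
  intros i _. apply h.
Qed.

Definition Mloc (HD : ultrafilter D) (HM : emerging_metric) : GStruct L :=
  {| carrier := locq;
     gd := fun c c' => Dlim D (fun i => gd (M i) (rep c i) (rep c' i));
     gfn := fun f cs => lm (uapp f (fun j => rep (cs j)))
              (emerging_local HD HM f _ (fun j => rep_local (cs j)));
     grl := fun P cs => exists ys : Ix (rarity L P) -> seqs,
              (forall j, local (ys j) /\ cls (cs j) = approx (ys j)) /\ urel P ys;
     gS := fun m c => exists x, inS m x /\ cls c = approx x |}.

End Ultra.

From Stdlib Require Import Reals Lra Lia Arith ClassicalEpsilon Classical FunctionalExtensionality PropExtensionality.
From Coquelicot Require Import Coquelicot.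
Open Scope R_scope.

(* Induction on formulas, simultaneously for all assignments in M_loc and all
   sequences of local elements representing them.  By (4) the functions respect ~, so a
   term evaluated in M_loc is the class of the term evaluated coordinatewise; by the
   triangle inequality ~-equivalent sequences have distances with the same D-limit; by (5)
   a relation holds in M_loc exactly when it holds in the ultraproduct; connectives commute
   with D-limits by continuity.  For a quantifier over S_m, elements of S_m(M_loc) are
   represented by sequences in S_m and every section of the S_m(M_i) yields one.  Formula
   values on S_m are bounded uniformly along D (a continuous connective is bounded on a box
   by sequential compactness), so the suprema in the M_i are finite, and choosing
   near-optimal witnesses in each M_i shows that their D-limit is the supremum in M_loc. *)

Lemma Ix_eq {k} (a b : Ix k) : proj1_sig a = proj1_sig b -> a = b.
Proof.
  destruct a as [a ha], b as [b hb]; simpl; intros ->.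
  f_equal; apply Peano_dec.le_unique.
Qed.

Definition Ix_lift {k} (j : Ix k) : Ix (S k) :=
  exist _ (proj1_sig j) (Nat.lt_lt_succ_r _ _ (proj2_sig j)).

Definition Ix_last (k : nat) : Ix (S k) := exist _ k (Nat.lt_succ_diag_r k).

Lemma Ix_S_cases {k} (P : Ix (S k) -> Prop) :
  (forall j, P (Ix_lift j)) -> P (Ix_last k) -> forall j, P j.
Proof.
  intros hlift hlast [j hj].
  destruct (Nat.eq_dec j k) as [->|hne].
  - replace (exist _ k hj) with (Ix_last k) by (apply Ix_eq; reflexivity). exact hlast.
  - assert (hjk : (j < k)%nat) by lia.
    replace (exist _ j hj) with (Ix_lift (exist (fun j => (j < k)%nat) j hjk))
      by (apply Ix_eq; reflexivity).
    apply hlift.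
Qed.

Lemma ext_lift {T : Type} {n} (a : Ix n -> T) (b : T) (j : Ix n) : ext a b (Ix_lift j) = a j.
Proof.
  unfold ext; simpl. destruct lt_dec as [h|h].
  - f_equal. apply Ix_eq. reflexivity.
  - exfalso. exact (h (proj2_sig j)).
Qed.

Lemma ext_last {T : Type} {n} (a : Ix n -> T) (b : T) : ext a b (Ix_last n) = b.
Proof. unfold ext; simpl. destruct lt_dec; [lia|reflexivity]. Qed.

Lemma Ix_finite_bound k (Q : Ix k -> nat -> Prop) :
  (forall j N N', (N <= N')%nat -> Q j N -> Q j N') ->
  (forall j, exists N, Q j N) -> exists N, forall j, Q j N.
Proof.
  intros hmono hex.
  destruct (finite_bound k (fun j N => forall h : (j < k)%nat, Q (exist _ j h) N)) as [N hN].
  - intros j hj. destruct (hex (exist _ j hj)) as [N hN]. exists N.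
    intros h. rewrite (Peano_dec.le_unique _ _ h hj). exact hN.
  - intros j N N' hle hq h. exact (hmono _ _ _ hle (hq h)).
  - exists N. intros [j hj]. exact (hN j hj hj).
Qed.

Definition strictly_increasing (phi : nat -> nat) : Prop := forall n, (phi n < phi (S n))%nat.

Lemma strictly_increasing_lt phi :
  strictly_increasing phi -> forall m n, (m < n)%nat -> (phi m < phi n)%nat.
Proof.
  intros hphi m n hmn. induction hmn as [|n hmn IH]; [apply hphi|].
  specialize (hphi n). lia.
Qed.

Lemma strictly_increasing_ge phi : strictly_increasing phi -> forall n, (n <= phi n)%nat.
Proof. intros hphi n. induction n as [|n IH]; [lia|]. specialize (hphi n). lia. Qed.

Lemma strictly_increasing_comp phi psi :
  strictly_increasing phi -> strictly_increasing psi -> strictly_increasing (fun n => phi (psi n)).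
Proof. intros hphi hpsi n. apply strictly_increasing_lt; [exact hphi|apply hpsi]. Qed.

Lemma Un_cv_subseq u l phi :
  strictly_increasing phi -> Un_cv u l -> Un_cv (fun n => u (phi n)) l.
Proof.
  intros hphi hu. apply is_lim_seq_Reals, is_lim_seq_subseq.
  - apply eventually_subseq, hphi.
  - apply is_lim_seq_Reals, hu.
Qed.

Lemma Un_cv_of_lt_inv u l : (forall n, Rabs (u n - l) < / INR (S n)) -> Un_cv u l.
Proof.
  intros hu eps he. destruct (archimed_cor1 eps he) as [N [hN hN0]].
  exists N. intros n hn. unfold R_dist.
  apply Rlt_trans with (/ INR (S n)); [apply hu|].
  apply Rle_lt_trans with (/ INR N); [|exact hN].
  apply Rinv_le_contravar; [apply lt_0_INR; lia|apply le_INR; lia].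
Qed.

Lemma Un_cv_Ix_uniform k (v : nat -> Ix k -> R) (x : Ix k -> R) :
  (forall j, Un_cv (fun n => v n j) (x j)) ->
  forall eps, 0 < eps -> exists N, forall n, (N <= n)%nat -> forall j, Rabs (v n j - x j) < eps.
Proof.
  intros hv eps he.
  destruct (Ix_finite_bound k (fun j N => forall n, (N <= n)%nat -> Rabs (v n j - x j) < eps))
    as [N hN].
  - intros j N N' hle hq n hn. apply hq. lia.
  - intros j. destruct (hv j eps he) as [N hN]. exists N. intros n hn. exact (hN n hn).
  - exists N. intros n hn j. exact (hN j n hn).
Qed.

Lemma bounded_seq_cv_subseq (w : nat -> R) B : (forall n, Rabs (w n) <= B) ->
  exists phi, strictly_increasing phi /\ exists l, Un_cv (fun n => w (phi n)) l.
Proof.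
  intros hb.
  destruct (Bolzano_Weierstrass w (fun c => -B <= c <= B) (compact_P3 _ _)) as [l hl].
  { intros n. apply Rabs_le_between, hb. }
  assert (hnear : forall Ne : nat * nat,
    exists p, (fst Ne <= p)%nat /\ Rabs (w p - l) < / INR (S (snd Ne))).
  { intros [N e]. assert (he : 0 < / INR (S e)) by (apply Rinv_0_lt_compat, lt_0_INR; lia).
    destruct (hl (fun y => Rabs (y - l) < / INR (S e)) N) as [p hp].
    - exists (mkposreal _ he). intros y hy. exact hy.
    - exists p. exact hp. }
  destruct (choice _ hnear) as [g hg].
  set (phi := fix phi n := match n with O => g (O, O) | S n' => g (S (phi n'), n) end).
  exists phi. split.
  - intros n. exact (proj1 (hg (S (phi n), S n))).
  - exists l. apply Un_cv_of_lt_inv. intros [|n]; [exact (proj2 (hg (O, O)))|exact (proj2 (hg _))].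
Qed.

Lemma bounded_vec_seq_cv_subseq k (y : nat -> Ix k -> R) B :
  (forall n j, Rabs (y n j) <= B) ->
  exists phi, strictly_increasing phi /\
    exists x : Ix k -> R, forall j, Un_cv (fun n => y (phi n) j) (x j).
Proof.
  revert y. induction k as [|k IH]; intros y hb.
  - exists (fun n => n). split; [intros n; lia|].
    exists (fun _ => 0). intros [j hj]; lia.
  - destruct (IH (fun n j => y n (Ix_lift j)) (fun n j => hb n (Ix_lift j)))
      as [phi [hphi [x hx]]].
    destruct (bounded_seq_cv_subseq (fun n => y (phi n) (Ix_last k)) B (fun n => hb _ _))
      as [psi [hpsi [l hl]]].
    exists (fun n => phi (psi n)). split; [exact (strictly_increasing_comp _ _ hphi hpsi)|].
    exists (ext x l). apply Ix_S_cases.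
    + intros j. rewrite ext_lift. exact (Un_cv_subseq _ _ _ hpsi (hx j)).
    + rewrite ext_last. exact hl.
Qed.

Lemma cont_conn_bounded k (u : (Ix k -> R) -> R) : cont_conn u -> forall B,
  exists C, forall y, (forall j, Rabs (y j) <= B) -> Rabs (u y) <= C.
Proof.
  intros hu B. apply NNPP; intros hunb.
  assert (hy : forall N : nat, exists y, (forall j, Rabs (y j) <= B) /\ INR N < Rabs (u y)).
  { intros N. apply NNPP; intros h. apply hunb. exists (INR N). intros y hyB.
    apply Rnot_lt_le; intros hlt. apply h. exists y. split; assumption. }
  destruct (choice _ hy) as [y hy'].
  destruct (bounded_vec_seq_cv_subseq k y B (fun n => proj1 (hy' n))) as [phi [hphi [x hx]]].
  destruct (hu x 1 Rlt_0_1) as [delta [hd hdelta]].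
  destruct (Un_cv_Ix_uniform k _ x hx delta hd) as [N hN].
  destruct (INR_unbounded (Rabs (u x) + 1)) as [K hK].
  set (n := Nat.max N K).
  assert (hclose := hdelta (y (phi n)) (hN n ltac:(lia))).
  assert (hlarge := proj2 (hy' (phi n))).
  assert (INR K <= INR (phi n))
    by (apply le_INR; pose proof (strictly_increasing_ge phi hphi n); lia).
  pose proof (Rabs_triang_inv (u (y (phi n))) (u x)). lra.
Qed.

Lemma real_Lub_spec (S : R -> Prop) B : (exists s, S s) -> (forall s, S s -> s <= B) ->
  (forall s, S s -> s <= real (Lub_Rbar S)) /\
  (forall b, (forall s, S s -> s <= b) -> real (Lub_Rbar S) <= b).
Proof.
  intros [s0 hs0] hB. destruct (Lub_Rbar_correct S) as [hub hlub].
  assert (hle : Rbar_le (Lub_Rbar S) B) by (apply hlub; intros s hs; exact (hB s hs)).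
  revert hub hlub hle. destruct (Lub_Rbar S) as [T| |]; simpl; intros hub hlub hle.
  - split; [exact hub|]. intros b hb. exact (hlub (Finite b) hb).
  - contradiction.
  - contradiction (hub s0 hs0).
Qed.

Lemma real_Lub_between (S : R -> Prop) a b : (exists s, S s /\ a < s) -> (forall s, S s -> s <= b) ->
  a < real (Lub_Rbar S) <= b.
Proof.
  intros [s [hs has]] hb.
  destruct (real_Lub_spec S b (ex_intro _ s hs) hb) as [hub hlub].
  split; [apply Rlt_le_trans with s; auto|exact (hlub b hb)].
Qed.

Lemma real_Lub_approx (S : R -> Prop) B : (exists s, S s) -> (forall s, S s -> s <= B) ->
  forall eps, 0 < eps -> exists s, S s /\ real (Lub_Rbar S) - eps < s.
Proof.
  intros hne hB eps he. apply NNPP; intros hn.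
  assert (real (Lub_Rbar S) <= real (Lub_Rbar S) - eps); [|lra].
  apply (real_Lub_spec S B hne hB). intros s hs.
  apply Rnot_lt_le; intros hlt. apply hn. exists s. split; assumption.
Qed.

Lemma real_Lub_empty (S : R -> Prop) : (forall s, ~ S s) -> real (Lub_Rbar S) = 0.
Proof.
  intros h. replace (Lub_Rbar S) with m_infty; [reflexivity|].
  symmetry. apply is_lub_Rbar_unique. split.
  - intros s hs. contradiction (h s hs).
  - intros b _. destruct b; simpl; trivial.
Qed.

Lemma real_Lub_abs_le (S : R -> Prop) B : 0 <= B -> (forall s, S s -> Rabs s <= B) ->
  Rabs (real (Lub_Rbar S)) <= B.
Proof.
  intros hB hS. destruct (classic (exists s, S s)) as [[s hs]|hemp].
  - assert (hS' : forall s, S s -> s <= B) by (intros s' hs'; apply Rabs_le_between, hS, hs').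
    destruct (real_Lub_spec S B (ex_intro _ s hs) hS') as [hub hlub].
    assert (hsB := proj1 (Rabs_le_between s B) (hS s hs)). specialize (hub s hs).
    apply Rabs_le_between. split; [lra|exact (hlub B hS')].
  - rewrite real_Lub_empty by (intros s hs; apply hemp; exists s; exact hs).
    rewrite Rabs_R0. exact hB.
Qed.

Lemma real_Glb_opp (S : R -> Prop) : real (Glb_Rbar S) = - real (Lub_Rbar (fun x => S (- x))).
Proof.
  replace (Glb_Rbar S) with (Rbar_opp (Lub_Rbar (fun x => S (- x)))).
  - destruct (Lub_Rbar _); simpl; lra.
  - symmetry. apply is_glb_Rbar_unique, is_lub_Rbar_opp.
    rewrite Rbar_opp_involutive. apply Lub_Rbar_correct.
Qed.

Lemma real_Glb_abs_le (S : R -> Prop) B : 0 <= B -> (forall s, S s -> Rabs s <= B) ->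
  Rabs (real (Glb_Rbar S)) <= B.
Proof.
  intros hB hS. rewrite real_Glb_opp, Rabs_Ropp.
  apply real_Lub_abs_le; [exact hB|]. intros s hs. rewrite <- Rabs_Ropp. exact (hS _ hs).
Qed.

Section Ultrafilter.
Context {I : Type} {D : (I -> Prop) -> Prop} (HD : ultrafilter D).

Lemma D_mono (A B : I -> Prop) : D A -> (forall i, A i -> B i) -> D B.
Proof. apply (uf_up D HD). Qed.

Lemma D_and (A B : I -> Prop) : D A -> D B -> D (fun i => A i /\ B i).
Proof. apply (uf_inter D HD). Qed.

Lemma D_all (A : I -> Prop) : (forall i, A i) -> D A.
Proof. intros h. apply (D_mono _ _ (uf_full D HD)). intros i _. apply h. Qed.

Lemma D_witness (A : I -> Prop) : D A -> exists i, A i.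
Proof.
  intros h. apply NNPP; intros hn. apply (uf_empty D HD).
  apply (D_mono _ _ h). intros i hi. apply hn. exists i. exact hi.
Qed.

Lemma D_not (A : I -> Prop) : ~ D A -> D (fun i => ~ A i).
Proof. intros h. destruct (uf_ultra D HD A); tauto. Qed.

Lemma D_forall_Ix k (P : Ix k -> I -> Prop) : (forall j, D (P j)) -> D (fun i => forall j, P j i).
Proof.
  revert P. induction k as [|k IH]; intros P h.
  - apply D_all. intros i [j hj]. lia.
  - apply (D_mono _ _ (D_and _ _ (IH (fun j => P (Ix_lift j)) (fun j => h _)) (h (Ix_last k)))).
    intros i [hlift hlast]. exact (Ix_S_cases (fun j => P j i) hlift hlast).
Qed.

Lemma D_uniform_bound k (P : Ix k -> nat -> I -> Prop) :
  (forall j N N' i, (N <= N')%nat -> P j N i -> P j N' i) ->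
  (forall j, exists N, D (P j N)) -> exists N, D (fun i => forall j, P j N i).
Proof.
  intros hmono hex.
  destruct (Ix_finite_bound k (fun j N => D (P j N))) as [N hN].
  - intros j N N' hle h. apply (D_mono _ _ h). intros i. apply hmono, hle.
  - exact hex.
  - exists N. apply D_forall_Ix, hN.
Qed.

Lemma D_section {Y : I -> Type} (HY : forall i, inhabited (Y i)) (P : forall i, Y i -> Prop) :
  D (fun i => exists y, P i y) -> exists z : forall i, Y i, D (fun i => P i (z i)).
Proof.
  intros h. exists (fun i => epsilon (HY i) (P i)).
  apply (D_mono _ _ h). intros i hi. exact (epsilon_spec (HY i) (P i) hi).
Qed.

Lemma D_forall_of_sections {Y : I -> Type} (HY : forall i, inhabited (Y i))
  (Q P : forall i, Y i -> Prop) :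
  (forall z : forall i, Y i, D (fun i => Q i (z i)) -> D (fun i => P i (z i))) ->
  D (fun i => forall y, Q i y -> P i y).
Proof.
  intros h. apply NNPP; intros hn.
  destruct (D_section HY (fun i y => Q i y /\ ~ P i y)) as [z hz].
  - apply (D_mono _ _ (D_not _ hn)). intros i hi. apply NNPP; intros hne. apply hi.
    intros y hq. apply NNPP; intros hp. apply hne. exists y. split; assumption.
  - destruct (D_witness _ (D_and _ _ hz (h z (D_mono _ _ hz (fun i hi => proj1 hi)))))
      as [i [[_ hnp] hp]].
    exact (hnp hp).
Qed.

Lemma ulim_eq (u v : I -> R) r : ulim D u r -> D (fun i => u i = v i) -> ulim D v r.
Proof.
  intros h he eps heps. apply (D_mono _ _ (D_and _ _ (h eps heps) he)).
  intros i [hu <-]. exact hu.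
Qed.

Lemma ulim_const (u : I -> R) r : D (fun i => u i = r) -> ulim D u r.
Proof.
  intros h eps he. apply (D_mono _ _ h). intros i ->.
  rewrite Rminus_diag, Rabs_R0. exact he.
Qed.

Lemma ulim_abs_le (u : I -> R) r B : ulim D u r -> D (fun i => Rabs (u i) <= B) -> Rabs r <= B.
Proof.
  intros h hb. apply Rnot_lt_le; intros hlt.
  destruct (D_witness _ (D_and _ _ (h (Rabs r - B) ltac:(lra)) hb)) as [i [hclose hui]].
  pose proof (Rabs_triang_inv r (u i)). rewrite Rabs_minus_sym in hclose. lra.
Qed.

Lemma ulim_opp (u : I -> R) r : ulim D u r -> ulim D (fun i => - u i) (- r).
Proof.
  intros h eps he. apply (D_mono _ _ (h eps he)). intros i hi.
  replace (- u i - - r) with (- (u i - r)) by ring. rewrite Rabs_Ropp. exact hi.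
Qed.

Lemma ulim_of_bounded (u : I -> R) B : D (fun i => Rabs (u i) <= B) -> exists r, ulim D u r.
Proof.
  intros hb.
  set (E := fun s => D (fun i => s <= u i)).
  assert (hEub : forall s, E s -> s <= B).
  { intros s hs. destruct (D_witness _ (D_and _ _ hs hb)) as [i [h1 h2]].
    apply Rabs_le_between in h2. lra. }
  assert (hEne : E (- B)).
  { apply (D_mono _ _ hb). intros i hi. apply Rabs_le_between in hi. lra. }
  destruct (completeness E (ex_intro _ B hEub) (ex_intro _ _ hEne)) as [r [hub hlub]].
  exists r. intros eps he.
  assert (hlow : D (fun i => r - eps / 2 <= u i)).
  { apply NNPP; intros hn. assert (r <= r - eps / 2); [|lra].
    apply hlub. intros s hs. apply Rnot_lt_le; intros hlt. apply hn.
    apply (D_mono _ _ hs). intros i hi. lra. }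
  assert (hup : D (fun i => ~ r + eps / 2 <= u i)).
  { apply D_not. intros h. assert (r + eps / 2 <= r) by exact (hub _ h). lra. }
  apply (D_mono _ _ (D_and _ _ hlow hup)). intros i [h1 h2]. apply Rabs_def1; lra.
Qed.

Section Supremum.
Variables (Si : I -> R -> Prop) (Sl : R -> Prop) (B : R).
Hypothesis Si_bounded : D (fun i => forall s, Si i s -> Rabs s <= B).
Hypothesis Sl_approx : forall r, Sl r -> exists v : I -> R, D (fun i => Si i (v i)) /\ ulim D v r.
Hypothesis Si_lim : forall v : I -> R, D (fun i => Si i (v i)) -> exists r, Sl r /\ ulim D v r.

Lemma Sl_abs_le r : Sl r -> Rabs r <= B.
Proof.
  intros hr. destruct (Sl_approx r hr) as [v [hv hlim]].
  apply (ulim_abs_le v r B hlim). apply (D_mono _ _ (D_and _ _ hv Si_bounded)).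
  intros i [hvi hb]. exact (hb _ hvi).
Qed.

Lemma D_Si_le T eps : (forall r, Sl r -> r <= T) -> 0 < eps ->
  D (fun i => forall s, Si i s -> s <= T + eps).
Proof.
  intros hT he. apply (D_forall_of_sections (Y := fun _ => R) (fun _ => inhabits 0)).
  intros v hv. destruct (Si_lim v hv) as [r [hr hlim]].
  apply (D_mono _ _ (hlim eps he)). intros i hi.
  apply Rabs_def2 in hi. specialize (hT r hr). lra.
Qed.

Lemma D_Si_empty : (forall r, ~ Sl r) -> D (fun i => forall s, ~ Si i s).
Proof.
  intros hemp.
  apply (D_forall_of_sections (Y := fun _ => R) (fun _ => inhabits 0) Si (fun _ _ => False)).
  intros v hv. destruct (Si_lim v hv) as [r [hr _]]. contradiction (hemp r hr).
Qed.

Lemma ulim_Lub : ulim D (fun i => real (Lub_Rbar (Si i))) (real (Lub_Rbar Sl)).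
Proof.
  destruct (classic (exists r, Sl r)) as [hne|hemp].
  - assert (hSlB : forall r, Sl r -> r <= B)
      by (intros r hr; exact (Rle_trans _ _ _ (Rle_abs r) (Sl_abs_le r hr))).
    set (T := real (Lub_Rbar Sl)).
    assert (hT : forall r, Sl r -> r <= T) by exact (proj1 (real_Lub_spec Sl B hne hSlB)).
    intros eps he.
    destruct (real_Lub_approx Sl B hne hSlB (eps / 2) ltac:(lra)) as [r [hr hrT]]. fold T in hrT.
    destruct (Sl_approx r hr) as [v [hv hlim]].
    apply (D_mono _ _ (D_and _ _ (D_and _ _ hv (hlim (eps / 2) ltac:(lra)))
                                 (D_Si_le T (eps / 2) hT ltac:(lra)))).
    intros i [[hvi hclose] hle]. apply Rabs_def2 in hclose.
    destruct (real_Lub_between (Si i) (T - eps) (T + eps / 2)) as [h1 h2].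
    + exists (v i). split; [exact hvi|lra].
    + exact hle.
    + apply Rabs_def1; lra.
  - assert (hemp' : forall r, ~ Sl r) by (intros r hr; apply hemp; exists r; exact hr).
    rewrite (real_Lub_empty Sl hemp').
    apply ulim_const. apply (D_mono _ _ (D_Si_empty hemp')). intros i hi.
    exact (real_Lub_empty _ hi).
Qed.

End Supremum.

Lemma ulim_Glb (Si : I -> R -> Prop) (Sl : R -> Prop) (B : R) :
  D (fun i => forall s, Si i s -> Rabs s <= B) ->
  (forall r, Sl r -> exists v : I -> R, D (fun i => Si i (v i)) /\ ulim D v r) ->
  (forall v : I -> R, D (fun i => Si i (v i)) -> exists r, Sl r /\ ulim D v r) ->
  ulim D (fun i => real (Glb_Rbar (Si i))) (real (Glb_Rbar Sl)).
Proof.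
  intros hB happrox hlim. rewrite real_Glb_opp.
  apply (ulim_eq (fun i => - real (Lub_Rbar (fun x => Si i (- x))))).
  2:{ apply D_all. intros i. symmetry. apply real_Glb_opp. }
  apply ulim_opp, (ulim_Lub _ _ B).
  - apply (D_mono _ _ hB). intros i hi s hs. rewrite <- Rabs_Ropp. exact (hi _ hs).
  - intros r hr. destruct (happrox (- r) hr) as [v [hv hl]].
    exists (fun i => - v i). split.
    + apply (D_mono _ _ hv). intros i hi. rewrite Ropp_involutive. exact hi.
    + rewrite <- (Ropp_involutive r). exact (ulim_opp _ _ hl).
  - intros v hv. destruct (hlim (fun i => - v i) hv) as [r [hr hl]].
    exists (- r). split; [rewrite Ropp_involutive; exact hr|].
    apply (ulim_eq _ _ _ (ulim_opp _ _ hl)). apply D_all. intros i. apply Ropp_involutive.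
Qed.

End Ultrafilter.

Definition quantified_values {L : Vocab} (N : GStruct L) {n} (m : nat) (psi : formula L (S n))
  (a : Ix n -> carrier N) : R -> Prop :=
  fun r => exists b, gS N m b /\ r = eval N psi (ext a b).

Section LocalUltraproduct.
Context {L : Vocab} {I : Type} (D : (I -> Prop) -> Prop) (M : I -> GStruct L)
  (HD : ultrafilter D) (HM : emerging_metric D M) (Hne : forall i, inhabited (carrier (M i))).

Local Notation ML := (Mloc D M HD HM).
Local Notation seqs := (seqs M).
Local Notation approx := (approx D M).
Local Notation local := (local D M).
Local Notation inS := (inS D M).
Local Notation cls := (cls D M).
Local Notation rep := (rep D M).

Lemma approx_refl x : approx x x.
Proof.
  intros n hn. apply (D_mono HD _ _ (em_refl D M HM x)). intros i ->.
  left. apply Rinv_0_lt_compat, lt_0_INR. exact hn.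
Qed.

Lemma approx_sym x y : approx x y -> approx y x.
Proof.
  intros h n hn. apply (D_mono HD _ _ (D_and HD _ _ (h n hn) (em_sym D M HM x y))).
  intros i [hxy <-]. exact hxy.
Qed.

Lemma approx_lt x y : approx x y -> forall delta, 0 < delta ->
  D (fun i => gd (M i) (x i) (y i) < delta).
Proof.
  intros h delta hd. destruct (archimed_cor1 delta hd) as [N [hN hN0]].
  apply (D_mono HD _ _ (h N hN0)). intros i hi. lra.
Qed.

Lemma approx_trans x y z : approx x y -> approx y z -> approx x z.
Proof.
  intros hxy hyz n hn.
  assert (hp : 0 < / INR n) by (apply Rinv_0_lt_compat, lt_0_INR; exact hn).
  apply (D_mono HD _ _ (D_and HD _ _ (D_and HD _ _ (approx_lt x y hxy (/ INR n / 2) ltac:(lra))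
     (approx_lt y z hyz (/ INR n / 2) ltac:(lra))) (em_tri D M HM x y z))).
  intros i [[h1 h2] h3]. lra.
Qed.

Lemma approx_class_eq x y : approx x y -> approx x = approx y.
Proof.
  intros h. apply functional_extensionality; intros z.
  apply propositional_extensionality; split; intros h'.
  - exact (approx_trans y x z (approx_sym x y h) h').
  - exact (approx_trans x y z h h').
Qed.

Lemma cls_rep c : cls c = approx (rep c).
Proof.
  unfold rep. exact (proj2 (proj2_sig (constructive_indefinite_description _ (cls_ok D M c)))).
Qed.

Lemma approx_rep c x : cls c = approx x -> approx x (rep c).
Proof. intros h. rewrite <- h, cls_rep. apply approx_refl. Qed.

Lemma gS_mono i m m' b : (m <= m')%nat -> gS (M i) m b -> gS (M i) m' b.
Proof. intros hle hb. induction hle; [exact hb|]. apply (em_mono D M HM). assumption. Qed.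

Lemma local_common_bound k (xs : Ix k -> seqs) : (forall j, local (xs j)) ->
  exists m, D (fun i => forall j, gS (M i) m (xs j i)).
Proof.
  intros hl. apply (D_uniform_bound HD k (fun j m i => gS (M i) m (xs j i))).
  - intros j m m' i. apply gS_mono.
  - exact hl.
Qed.

Lemma local_common_inS k (xs : Ix k -> seqs) : (forall j, local (xs j)) ->
  exists m, forall j, inS m (xs j).
Proof.
  intros hl. destruct (local_common_bound k xs hl) as [m hm].
  exists m. intros j. apply (D_mono HD _ _ hm). intros i hi. apply hi.
Qed.

Lemma uapp_approx f (xs ys : Ix (farity L f) -> seqs) :
  (forall j, local (xs j)) -> (forall j, local (ys j)) ->
  (forall j, approx (xs j) (ys j)) -> approx (uapp M f xs) (uapp M f ys).
Proof.
  intros hx hy ha.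
  destruct (local_common_inS _ xs hx) as [m1 h1], (local_common_inS _ ys hy) as [m2 h2].
  intros n hn. assert (hp : 0 < / INR n) by (apply Rinv_0_lt_compat, lt_0_INR; exact hn).
  destruct (em_cont D M HM f (Nat.max m1 m2) (/ INR n) hp) as [delta [hd hdelta]].
  apply (D_mono HD _ _ (hdelta xs ys
    (fun j => inS_mono D M HD HM m1 (Nat.max m1 m2) _ (Nat.le_max_l _ _) (h1 j))
    (fun j => inS_mono D M HD HM m2 (Nat.max m1 m2) _ (Nat.le_max_r _ _) (h2 j))
    (fun j => approx_lt _ _ (ha j) delta hd))).
  intros i hi. lra.
Qed.

Definition tev {n} (t : term L n) (x : Ix n -> seqs) : seqs :=
  fun i => teval (M i) t (fun j => x j i).

Lemma tev_local {n} (t : term L n) x : (forall j, local (x j)) -> local (tev t x).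
Proof.
  intros hx. induction t as [j|f ts IH]; [apply hx|].
  exact (emerging_local D M HD HM f (fun j => tev (ts j) x) IH).
Qed.

Lemma ext_app {n} (x : Ix n -> seqs) (z : seqs) i :
  (fun j => ext x z j i) = ext (fun j => x j i) (z i).
Proof. apply functional_extensionality; intros j. unfold ext. destruct lt_dec; reflexivity. Qed.

Definition represents {n} (c : Ix n -> locq D M) (x : Ix n -> seqs) : Prop :=
  forall j, local (x j) /\ cls (c j) = approx (x j).

Lemma tev_cls {n} (t : term L n) c x : represents c x -> cls (teval ML t c) = approx (tev t x).
Proof.
  intros hcx. induction t as [j|f ts IH]; [apply hcx|].
  apply approx_class_eq, uapp_approx.
  - intros j. apply rep_local.
  - intros j. apply tev_local. intros j'. apply hcx.
  - intros j. apply approx_sym, approx_rep, IH.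
Qed.

Lemma represents_tev {n} k (ts : Ix k -> term L n) c x : represents c x ->
  represents (fun j => teval ML (ts j) c) (fun j => tev (ts j) x).
Proof.
  intros hcx j. split; [|exact (tev_cls (ts j) c x hcx)].
  apply tev_local. intros j'. apply hcx.
Qed.

Lemma represents_ext {n} (c : Ix n -> locq D M) x b z :
  represents c x -> local z -> cls b = approx z -> represents (ext c b) (ext x z).
Proof. intros hcx hz hb j. unfold ext. destruct lt_dec; [apply hcx|split; assumption]. Qed.

Lemma gfn_S_closed f K : exists K', D (fun i => forall ys : Ix (farity L f) -> carrier (M i),
  (forall j, gS (M i) K (ys j)) -> gS (M i) K' (gfn (M i) f ys)).
Proof.
  destruct (em_fun D M HM f K) as [K' hK']. exists K'.
  apply (D_forall_of_sections HD (Y := fun i => Ix (farity L f) -> carrier (M i))).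
  - intros i. destruct (Hne i) as [a]. exact (inhabits (fun _ => a)).
  - intros z hz. apply (hK' (fun j i => z i j)). intros j.
    apply (D_mono HD _ _ hz). intros i hi. apply hi.
Qed.

Lemma teval_S_bound {n} (t : term L n) m : exists k, D (fun i => forall y : Ix n -> carrier (M i),
  (forall j, gS (M i) m (y j)) -> gS (M i) k (teval (M i) t y)).
Proof.
  induction t as [j|f ts IH].
  - exists m. apply (D_all HD). intros i y hy. apply hy.
  - destruct (D_uniform_bound HD _ (fun j k i => forall y : Ix n -> carrier (M i),
        (forall j, gS (M i) m (y j)) -> gS (M i) k (teval (M i) (ts j) y))) as [K hK].
    + intros j k k' i hle h y hy. exact (gS_mono i k k' _ hle (h y hy)).
    + exact IH.
    + destruct (gfn_S_closed f K) as [K' hK']. exists K'.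
      apply (D_mono HD _ _ (D_and HD _ _ hK hK')). intros i [hts hf] y hy.
      apply hf. intros j. exact (hts j y hy).
Qed.

Lemma gd_S_bound k : D (fun i => forall p q, gS (M i) k p -> gS (M i) k q ->
  Rabs (gd (M i) p q) <= INR k).
Proof.
  assert (hU : D (fun i => forall pq : carrier (M i) * carrier (M i),
     gS (M i) k (fst pq) /\ gS (M i) k (snd pq) -> gd (M i) (fst pq) (snd pq) <= INR k)).
  { apply (D_forall_of_sections HD (Y := fun i => (carrier (M i) * carrier (M i))%type)).
    - intros i. destruct (Hne i) as [a]. exact (inhabits (a, a)).
    - intros z hz. apply (em_bound D M HM k (fun i => fst (z i)) (fun i => snd (z i)));
        apply (D_mono HD _ _ hz); intros i hi; apply hi. }
  apply (D_mono HD _ _ hU). intros i h p q hp hq.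
  rewrite Rabs_pos_eq by apply (em_nonneg D M HM).
  exact (h (p, q) (conj hp hq)).
Qed.

Lemma ext_S i {n} m (y : Ix n -> carrier (M i)) b :
  (forall j, gS (M i) m (y j)) -> gS (M i) m b -> forall j, gS (M i) m (ext y b j).
Proof. intros hy hb j. unfold ext. destruct lt_dec; auto. Qed.

Definition S_bounded {n} (phi : formula L n) : Prop :=
  forall m, exists N : nat, D (fun i => forall y : Ix n -> carrier (M i),
    (forall j, gS (M i) m (y j)) -> Rabs (eval (M i) phi y) <= INR N).

Lemma qvals_S_bound {n} (psi : formula L (S n)) mq : S_bounded psi ->
  forall m, exists N : nat, D (fun i => forall y : Ix n -> carrier (M i),
    (forall j, gS (M i) m (y j)) -> forall s, quantified_values (M i) mq psi y s -> Rabs s <= INR N).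
Proof.
  intros hpsi m. destruct (hpsi (Nat.max m mq)) as [N hN]. exists N.
  apply (D_mono HD _ _ hN). intros i hi y hy s [b [hb ->]].
  apply hi, ext_S.
  - intros j. apply (gS_mono i m); [lia|apply hy].
  - apply (gS_mono i mq); [lia|exact hb].
Qed.

Lemma eval_S_bounded {n} (phi : formula L n) : S_bounded phi.
Proof.
  induction phi as [n t1 t2|n P ts|n k u hu ps IH|n mq psi IH|n mq psi IH]; intros m.
  - destruct (teval_S_bound t1 m) as [k1 h1], (teval_S_bound t2 m) as [k2 h2].
    exists (Nat.max k1 k2).
    apply (D_mono HD _ _ (D_and HD _ _ (D_and HD _ _ h1 h2) (gd_S_bound (Nat.max k1 k2)))).
    intros i [[ht1 ht2] hd] y hy. apply hd.
    + apply (gS_mono i k1); [lia|exact (ht1 y hy)].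
    + apply (gS_mono i k2); [lia|exact (ht2 y hy)].
  - exists 1%nat. apply (D_all HD). intros i y hy. simpl.
    destruct excluded_middle_informative; rewrite ?Rabs_R0, ?Rabs_R1; lra.
  - destruct (D_uniform_bound HD k (fun j N i => forall y : Ix n -> carrier (M i),
        (forall j, gS (M i) m (y j)) -> Rabs (eval (M i) (ps j) y) <= INR N)) as [N hN].
    + intros j N N' i hle h y hy. exact (Rle_trans _ _ _ (h y hy) (le_INR _ _ hle)).
    + intros j. exact (IH j m).
    + destruct (cont_conn_bounded k u hu (INR N)) as [C hC].
      destruct (INR_unbounded C) as [N' hN']. exists N'.
      apply (D_mono HD _ _ hN). intros i hi y hy. simpl.
      apply Rle_trans with C; [|lra]. apply hC. intros j. exact (hi j y hy).
  - destruct (qvals_S_bound psi mq IH m) as [N hN]. exists N.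
    apply (D_mono HD _ _ hN). intros i hi y hy.
    exact (real_Lub_abs_le _ _ (pos_INR N) (hi y hy)).
  - destruct (qvals_S_bound psi mq IH m) as [N hN]. exists N.
    apply (D_mono HD _ _ hN). intros i hi y hy.
    exact (real_Glb_abs_le _ _ (pos_INR N) (hi y hy)).
Qed.

Lemma gd_approx_close p p' q q' : approx p p' -> approx q q' -> forall eps, 0 < eps ->
  D (fun i => Rabs (gd (M i) (p i) (q i) - gd (M i) (p' i) (q' i)) < eps).
Proof.
  intros hp hq eps he.
  assert (a1 := approx_lt _ _ hp (eps / 2) ltac:(lra)).
  assert (a2 := approx_lt _ _ (approx_sym _ _ hp) (eps / 2) ltac:(lra)).
  assert (a3 := approx_lt _ _ hq (eps / 2) ltac:(lra)).
  assert (a4 := approx_lt _ _ (approx_sym _ _ hq) (eps / 2) ltac:(lra)).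
  assert (t1 := em_tri D M HM p p' q). assert (t2 := em_tri D M HM p' q' q).
  assert (t3 := em_tri D M HM p' p q'). assert (t4 := em_tri D M HM p q q').
  apply (D_mono HD _ _ (D_and HD _ _
    (D_and HD _ _ (D_and HD _ _ a1 a2) (D_and HD _ _ a3 a4))
    (D_and HD _ _ (D_and HD _ _ t1 t2) (D_and HD _ _ t3 t4)))).
  intros i [[[h1 h2] [h3 h4]] [[h5 h6] [h7 h8]]]. apply Rabs_def1; lra.
Qed.

Lemma ulim_gd_approx p p' q q' r : approx p p' -> approx q q' ->
  ulim D (fun i => gd (M i) (p' i) (q' i)) r -> ulim D (fun i => gd (M i) (p i) (q i)) r.
Proof.
  intros hp hq hl eps he.
  apply (D_mono HD _ _ (D_and HD _ _ (gd_approx_close p p' q q' hp hq (eps / 2) ltac:(lra))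
                                     (hl (eps / 2) ltac:(lra)))).
  intros i [h1 h2]. apply Rabs_def2 in h1, h2. apply Rabs_def1; lra.
Qed.

Lemma ulim_gd_Mloc (c1 c2 : locq D M) :
  ulim D (fun i => gd (M i) (rep c1 i) (rep c2 i)) (gd ML c1 c2).
Proof.
  simpl. unfold Dlim. apply epsilon_spec.
  destruct (rep_local D M c1) as [m1 h1], (rep_local D M c2) as [m2 h2].
  apply (ulim_of_bounded HD _ (INR (Nat.max m1 m2))).
  apply (D_mono HD _ _ (D_and HD _ _
    (D_and HD _ _ (inS_mono D M HD HM m1 _ _ (Nat.le_max_l m1 m2) h1)
                  (inS_mono D M HD HM m2 _ _ (Nat.le_max_r m1 m2) h2))
    (gd_S_bound (Nat.max m1 m2)))).
  intros i [[hp hq] hb]. exact (hb _ _ hp hq).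
Qed.

Lemma grl_Mloc_iff P (cs : Ix (rarity L P) -> locq D M) xs :
  represents cs xs -> grl ML P cs <-> urel D M P xs.
Proof.
  intros hcx. split.
  - intros [ys [hys hPys]]. apply NNPP; intros hPxs.
    destruct (local_common_inS _ xs (fun j => proj1 (hcx j))) as [m hm].
    destruct (em_rel D M HM P m xs hm hPxs) as [delta [hd hdelta]].
    apply (hdelta ys); [|exact hPys]. intros j. apply (approx_lt _ _); [|exact hd].
    rewrite <- (proj2 (hcx j)), (proj2 (hys j)). apply approx_refl.
  - intros hP. exists xs. split; assumption.
Qed.

Definition transfers {n} (phi : formula L n) : Prop :=
  forall c x, represents c x -> ulim D (fun i => eval (M i) phi (fun j => x j i)) (eval ML phi c).

Section Quantifier.
Context {n : nat} (m : nat) (psi : formula L (S n)) (c : Ix n -> locq D M) (x : Ix n -> seqs).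
Hypothesis hcx : represents c x.

Lemma qvals_bounded : exists B, D (fun i => forall s, quantified_values (M i) m psi (fun j => x j i) s -> Rabs s <= B).
Proof.
  destruct (local_common_bound n x (fun j => proj1 (hcx j))) as [m' hm'].
  destruct (qvals_S_bound psi m (eval_S_bounded psi) m') as [N hN]. exists (INR N).
  apply (D_mono HD _ _ (D_and HD _ _ hm' hN)). intros i [hx hb]. exact (hb _ hx).
Qed.

Hypothesis IH : transfers psi.

Lemma qvals_Mloc_approx r : quantified_values ML m psi c r ->
  exists v : I -> R, D (fun i => quantified_values (M i) m psi (fun j => x j i) (v i)) /\ ulim D v r.
Proof.
  intros [b [[z [hz hbz]] ->]].
  exists (fun i => eval (M i) psi (ext (fun j => x j i) (z i))). split.
  - apply (D_mono HD _ _ hz). intros i hi. exists (z i). split; [exact hi|reflexivity].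
  - apply (ulim_eq HD _ _ _ (IH _ _ (represents_ext c x b z hcx (ex_intro _ m hz) hbz))).
    apply (D_all HD). intros i. rewrite ext_app. reflexivity.
Qed.

Lemma qvals_section_lim (v : I -> R) : D (fun i => quantified_values (M i) m psi (fun j => x j i) (v i)) ->
  exists r, quantified_values ML m psi c r /\ ulim D v r.
Proof.
  intros hv.
  destruct (D_section HD Hne (fun i b => gS (M i) m b /\ v i = eval (M i) psi (ext (fun j => x j i) b)) hv)
    as [z hz].
  assert (hzS : inS m z) by (apply (D_mono HD _ _ hz); intros i hi; apply hi).
  set (b := lm D M z (ex_intro _ m hzS)).
  exists (eval ML psi (ext c b)). split.
  - exists b. split; [exists z; split; [exact hzS|reflexivity]|reflexivity].
  - apply (ulim_eq HD _ _ _ (IH _ _ (represents_ext c x b z hcx (ex_intro _ m hzS) eq_refl))).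
    apply (D_mono HD _ _ hz). intros i [_ ->]. rewrite ext_app. reflexivity.
Qed.

End Quantifier.

Theorem eval_transfers {n} (phi : formula L n) : transfers phi.
Proof.
  induction phi as [n t1 t2|n P ts|n k u hu ps IH|n m psi IH|n m psi IH]; intros c x hcx.
  - exact (ulim_gd_approx _ _ _ _ _
      (approx_rep _ _ (tev_cls t1 c x hcx)) (approx_rep _ _ (tev_cls t2 c x hcx))
      (ulim_gd_Mloc _ _)).
  - assert (hrel := grl_Mloc_iff P _ _ (represents_tev _ ts c x hcx)).
    simpl. destruct excluded_middle_informative as [hP|hP]; rewrite hrel in hP.
    + apply (ulim_const HD). apply (D_mono HD _ _ hP). intros i hi.
      destruct excluded_middle_informative as [_|hn]; [reflexivity|contradiction (hn hi)].
    + apply (ulim_const HD). apply (D_mono HD _ _ (D_not HD _ hP)). intros i hi.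
      destruct excluded_middle_informative as [h|_]; [contradiction (hi h)|reflexivity].
  - simpl. intros eps he.
    destruct (hu (fun j => eval ML (ps j) c) eps he) as [delta [hd hdelta]].
    apply (D_mono HD _ _ (D_forall_Ix HD _ _ (fun j => IH j c x hcx delta hd))).
    intros i hi. exact (hdelta _ hi).
  - destruct (qvals_bounded m psi c x hcx) as [B hB].
    exact (ulim_Lub HD _ _ B hB (qvals_Mloc_approx m psi c x hcx IH)
                                (qvals_section_lim m psi c x hcx IH)).
  - destruct (qvals_bounded m psi c x hcx) as [B hB].
    exact (ulim_Glb HD _ _ B hB (qvals_Mloc_approx m psi c x hcx IH)
                                (qvals_section_lim m psi c x hcx IH)).
Qed.

End LocalUltraproduct.

Theorem theorem2p10 (L : Vocab) (I : Type) (D : (I -> Prop) -> Prop)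
  (M : I -> GStruct L) (HD : ultrafilter D) (HM : emerging_metric D M)
  (Hne : forall i, inhabited (carrier (M i)))
  (n : nat) (sigma : formula L n) (m0 : nat)
  (a : forall i, Ix n -> carrier (M i))
  (Ha : forall i (j : Ix n), gS (M i) m0 (a i j)) :
  ulim D (fun i => eval (M i) sigma (a i))
    (eval (Mloc D M HD HM) sigma
       (fun j => lm D M (fun i => a i j)
                   (all_local D M HD m0 (fun i => a i j) (fun i => Ha i j)))).
Proof.
  apply (eval_transfers D M HD HM Hne sigma).
  intros j. split; [exact (all_local D M HD m0 _ (fun i => Ha i j))|reflexivity].
Qed.
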